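(* Let $k\geq3$, $A=\{0,1,\dots,k-1\}$, $N=k-1$ and let $T\colon A^{N^2}\to A$ be given by $T(x_{1,1},\dots,x_{1,N},\dots,x_{N,1},\dots,x_{N,N})=1$ if $x_{i,j}=i$ for all $i,j$ or $x_{i,j}=j$ for all $i,j$, and $0$ otherwise. Then \[\langle\{T\}\rangle\subseteq\{T\}^{**}\subseteq\{T\}^{*(1)*}\subseteq\mathrm{Pol}\bigl(\{U\subseteq A: 0\in U\}\bigr)\cap\mathrm{Pol}\bigl(\{\theta\in\mathrm{Eq}(A): (0,1)\in\theta\}\bigr),\] where $\mathrm{Eq}(A)$ denotes the set of all equivalence relations on $A$.
   Context: An $m$-ary $g$ commutes with an $n$-ary $h$ if $g\bigl((h((x_{ij})_{j}))_{i}\bigr)=h\bigl((g((x_{ij})_{i}))_{j}\bigr)$ for all $(x_{ij})\in A^{m\times n}$. For a set $F$ of finitary operations on $A$ (positive arity), $F^*$ is the set of all such operations commuting with every member of $F$; superscripts apply left to right, so $\{T\}^{**}=(\{T\}^* )^*$ and $\{T\}^{*(1)*}=((\{T\}^* )^{(1)})^*$, where $G^{(1)}$ is the set of unary members of $G$. $\langle\{T\}\rangle$ is the clone generated by $T$. For a set $Q$ of relations on $A$, $\mathrm{Pol}(Q)$ is the set of finitary operations preserving every relation in $Q$ (unary relations $U$ and binary relations $\theta$ are viewed as relations of arity 1 and 2). *)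

From mathcomp Require Import all_boot.
Set Implicit Arguments. Unset Strict Implicit. Unset Printing Implicit Defensive.

Record op (A : Type) := Op {
  arity : nat;
  arity_pos : 0 < arity;
  opfun :> ('I_arity -> A) -> A }.

Definition opset (A : Type) := op A -> Prop.

Definition subset_ops A (F G : opset A) := forall f, F f -> G f.

Definition inter_ops A (F G : opset A) : opset A := fun f => F f /\ G f.

Definition commutes A (g h : op A) : Prop :=
  forall x : 'I_(arity g) -> 'I_(arity h) -> A,
    g (fun i => h (fun j => x i j)) = h (fun j => g (fun i => x i j)).

Definition centralizer A (F : opset A) : opset A :=
  fun g => forall h, F h -> commutes g h.

Definition unary_part A (G : opset A) : opset A :=
  fun f => G f /\ arity f = 1.

Definition singleton_op A (T : op A) : opset A := fun f => f = T.

Inductive clone_gen A (F : opset A) : op A -> Prop :=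
| cg_base f : F f -> clone_gen F f
| cg_proj n (hn : 0 < n) (i : 'I_n) : clone_gen F (@Op A n hn (fun x => x i))
| cg_comp (f : op A) n (hn : 0 < n) (gs : 'I_(arity f) -> ('I_n -> A) -> A) :
    clone_gen F f -> (forall i, clone_gen F (@Op A n hn (gs i))) ->
    clone_gen F (@Op A n hn (fun x => f (fun i => gs i x))).

Definition preserves_set A (U : A -> Prop) (f : op A) : Prop :=
  forall x : 'I_(arity f) -> A, (forall i, U (x i)) -> U (f x).

Definition preserves_rel A (th : A -> A -> Prop) (f : op A) : Prop :=
  forall x y : 'I_(arity f) -> A, (forall i, th (x i) (y i)) -> th (f x) (f y).

Definition is_equivalence A (th : A -> A -> Prop) : Prop :=
  (forall a, th a a) /\ (forall a b, th a b -> th b a) /\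
  (forall a b c, th a b -> th b c -> th a c).

Definition Pol_sets A (Q : (A -> Prop) -> Prop) : opset A :=
  fun f => forall U, Q U -> preserves_set U f.

Definition Pol_rels A (Q : (A -> A -> Prop) -> Prop) : opset A :=
  fun f => forall th, Q th -> preserves_rel th f.

Lemma lt0k k : 2 < k -> 0 < k. Proof. by case: k. Qed.
Lemma lt1k k : 2 < k -> 1 < k. Proof. by case: k => // -[]. Qed.
Definition zeroA k (hk : 2 < k) : 'I_k := Ordinal (lt0k hk).
Definition oneA k (hk : 2 < k) : 'I_k := Ordinal (lt1k hk).

Lemma NN_pos k : 2 < k -> 0 < k.-1 * k.-1.
Proof. by case: k => // -[] // -[] // n _; rewrite muln_gt0. Qed.

(* T : A^(N^2) -> A with N = k-1.  The argument position p (0-based) of the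
   listing x_{1,1},...,x_{1,N},...,x_{N,1},...,x_{N,N} corresponds to
   i = p %/ N + 1, j = p %% N + 1. *)
Definition T_op k (hk : 2 < k) : op 'I_k :=
  @Op _ (k.-1 * k.-1) (NN_pos hk) (fun x =>
    if [forall p, nat_of_ord (x p) == p %/ k.-1 + 1]
       || [forall p, nat_of_ord (x p) == p %% k.-1 + 1]
    then oneA hk else zeroA hk).

(* Every unary map g of A with g 0 = g 1 = 0 commutes with T: since g is not
   injective, g o x misses some nonzero value, and T vanishes on such tuples;
   hence T (g o x) = 0 = g (T x).
   An operation f commuting with all these maps cannot output a nonzero value
   c that is absent from its arguments, because for c <> 0 such a map can have
   range exactly A \ {c}; and f maps theta-related tuples to theta-related
   values, because the map sending every element to the least element of its
   theta-class is of this kind and has kernel theta.  The first two inclusions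
   hold for every set F of operations: centralizers are clones, F is contained
   in F^**, and ^* reverses inclusion. *)

From mathcomp Require Import all_boot zify boolp.
Set Implicit Arguments. Unset Strict Implicit. Unset Printing Implicit Defensive.

Section Centralizers.
Variable A : Type.
Implicit Types (F G : opset A) (f g h : op A).

Lemma commutes_sym g h : commutes g h -> commutes h g.
Proof. by move=> gh x; exact: esym (gh (fun i j => x j i)). Qed.

Lemma centralizerS F G : subset_ops F G -> subset_ops (centralizer G) (centralizer F).
Proof. by move=> FG g cg h /FG; exact: cg. Qed.

Lemma sub_centralizer2 F : subset_ops F (centralizer (centralizer F)).
Proof. by move=> f Ff g cg; apply: commutes_sym; exact: cg. Qed.

Lemma clone_gen_sub_centralizer F G :
  subset_ops F (centralizer G) -> subset_ops (clone_gen F) (centralizer G).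
Proof.
move=> FG f; elim=> [g /FG //|n hn i h _ x //|g n hn gs _ IHg _ IHgs h Gh x /=].
transitivity (g (fun i => h (fun j => gs i (fun i' => x i' j)))); last exact: IHg.
by congr (@opfun _ g); apply: funext => i; exact: IHgs.
Qed.

Definition unary_op (g : A -> A) : op A := @Op A 1 (ltn0Sn 0) (fun x => g (x ord0)).

Lemma commutes_unary f (g : A -> A) :
  commutes f (unary_op g) -> forall x, f (fun i => g (x i)) = g (f x).
Proof. by move=> fg x; exact: (fg (fun i _ => x i)). Qed.

End Centralizers.

Lemma codom_full_inj (T : finType) (g : T -> T) :
  (forall y, y \in codom g) -> injective g.
Proof.
move=> onto; have /image_injP inj : #|codom g| == #|T|.
  rewrite eqn_leq leq_image_card; apply: subset_leq_card.
  by apply/subsetP => y _; exact: onto.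
by move=> a b; exact: inj.
Qed.

Section ClassMin.
Variables (n : nat) (th : 'I_n -> 'I_n -> Prop).
Hypotheses (th_refl : forall a, th a a) (th_sym : forall a b, th a b -> th b a)
  (th_trans : forall a b c, th a b -> th b c -> th a c).

Definition class_min (a : 'I_n) : 'I_n := [arg min_(b < a | `[< th a b >]) val b].

Lemma class_min_spec a : th a (class_min a) /\ forall b, th a b -> class_min a <= b.
Proof.
rewrite /class_min; case: arg_minnP => [|m /asboolP tham min_m].
  by apply/asboolP; exact: th_refl.
by split=> // b /asboolP; exact: min_m.
Qed.

Lemma class_min_le a : class_min a <= a.
Proof. by apply: (proj2 (class_min_spec a)); exact: th_refl. Qed.

Lemma class_minP a b : class_min a = class_min b <-> th a b.
Proof.
have [tha min_a] := class_min_spec a; have [thb min_b] := class_min_spec b.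
split=> [eq_ab|th_ab].
  by apply: th_trans tha _; rewrite eq_ab; exact: th_sym.
apply: val_inj; apply/eqP; rewrite eqn_leq min_a ?min_b //.
  by apply: th_trans tha; exact: th_trans (th_sym th_ab) _.
by apply: th_trans th_ab thb.
Qed.

End ClassMin.

Section TOp.
Variables (k : nat) (hk : 2 < k).

Lemma neq_zeroA_gt0 (v : 'I_k) : v != zeroA hk -> 0 < v.
Proof. by rewrite lt0n; apply: contra => /eqP v0; apply/eqP/val_inj. Qed.

Lemma T_op_neq0_codom x :
  T_op hk x != zeroA hk -> forall v, v != zeroA hk -> v \in codom x.
Proof.
rewrite /T_op /=; case: ifP => [/orP pattern _|_]; last by rewrite eqxx.
move=> v /neq_zeroA_gt0 v_gt0.
have N_gt0 : 0 < k.-1 by lia.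
have v_lt : v.-1 < k.-1 by have := ltn_ord v; lia.
case: pattern => /forallP pattern.
- have p_lt : v.-1 * k.-1 < k.-1 * k.-1 by rewrite ltn_mul2r N_gt0.
  apply/codomP; exists (Ordinal p_lt); apply: val_inj => /=.
  by rewrite (eqP (pattern _)) /= mulnK //; lia.
- have p_lt : v.-1 < k.-1 * k.-1 by apply: leq_trans v_lt _; rewrite leq_pmulr.
  apply/codomP; exists (Ordinal p_lt); apply: val_inj => /=.
  by rewrite (eqP (pattern _)) /= modn_small //; lia.
Qed.

Lemma T_op_collapse (g : 'I_k -> 'I_k) y :
  g (zeroA hk) = zeroA hk -> g (oneA hk) = zeroA hk ->
  T_op hk (fun p => g (y p)) = zeroA hk.
Proof.
move=> g0 g1.
case: (eqVneq (T_op hk (fun p => g (y p))) (zeroA hk)) => // /T_op_neq0_codom onto.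
have : injective g.
  apply: codom_full_inj => v; case: (eqVneq v (zeroA hk)) => [->|/onto /codomP [p ->]].
    by rewrite -g0; exact: codom_f.
  exact: codom_f.
by move/(_ _ _ (etrans g0 (esym g1)))/(congr1 val).
Qed.

Lemma collapse_commutes_T (g : 'I_k -> 'I_k) :
  g (zeroA hk) = zeroA hk -> g (oneA hk) = zeroA hk -> commutes (unary_op g) (T_op hk).
Proof.
by move=> g0 g1 x /=; move: (T_op_collapse (x ord0) g0 g1) => /= ->; case: ifP.
Qed.

Section CollapseCommuting.
Variable f : op 'I_k.
Hypothesis f_comm : forall g : 'I_k -> 'I_k,
  g (zeroA hk) = zeroA hk -> g (oneA hk) = zeroA hk ->
  forall x, f (fun i => g (x i)) = g (f x).

Lemma op_neq_absent c x : c != zeroA hk -> (forall i, x i != c) -> f x != c.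
Proof.
move=> c0 xc.
pose g a := if a == oneA hk then zeroA hk else if a == c then oneA hk else a.
pose h a := if a == oneA hk then c else a.
have g0 : g (zeroA hk) = zeroA hk by rewrite /g /= eq_sym (negbTE c0).
have g1 : g (oneA hk) = zeroA hk by rewrite /g eqxx.
have gh a : a != c -> g (h a) = a.
  rewrite /g /h; case: (eqVneq a (oneA hk)) => [-> c1|a1 ac].
    by rewrite eq_sym (negbTE c1) eqxx.
  by rewrite (negbTE a1) (negbTE ac).
have g_neq a : g a != c.
  rewrite /g; case: (eqVneq a (oneA hk)) => [_|a1]; first by rewrite eq_sym.
  by case: (eqVneq a c) => [ac|//]; rewrite -ac eq_sym.
have -> : x = (fun i => g (h (x i))) by apply: funext => i; rewrite gh.
by rewrite (f_comm g0 g1 (fun i => h (x i))).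
Qed.

Lemma op_preserves_zero_set (U : 'I_k -> Prop) x :
  U (zeroA hk) -> (forall i, U (x i)) -> U (f x).
Proof.
move=> U0 Ux; apply: contrapT => notU.
have fx_neq0 : f x != zeroA hk by apply: contra_not_neq notU => ->.
have x_neq_fx i : x i != f x by apply: contra_not_neq notU => <-; exact: Ux.
by have := op_neq_absent fx_neq0 x_neq_fx; rewrite eqxx.
Qed.

Lemma op_preserves_equiv (th : 'I_k -> 'I_k -> Prop) x y :
  is_equivalence th -> th (zeroA hk) (oneA hk) ->
  (forall i, th (x i) (y i)) -> th (f x) (f y).
Proof.
move=> [th_refl [th_sym th_trans]] th01 xy.
apply/(class_minP th_refl th_sym th_trans); set r := class_min th.
have r0 : r (zeroA hk) = zeroA hk.
  by apply: val_inj; apply/eqP; rewrite -leqn0; exact: class_min_le.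
have r1 : r (oneA hk) = zeroA hk by rewrite -r0; apply/class_minP => //; exact: th_sym.
rewrite -(f_comm r0 r1 x) -(f_comm r0 r1 y); congr (@opfun _ f); apply: funext => i.
exact/class_minP.
Qed.

End CollapseCommuting.
End TOp.

Theorem lemma3p5 (k : nat) (hk : 2 < k) :
  let T := singleton_op (T_op hk) in
  subset_ops (clone_gen T) (centralizer (centralizer T)) /\
  subset_ops (centralizer (centralizer T))
             (centralizer (unary_part (centralizer T))) /\
  subset_ops (centralizer (unary_part (centralizer T)))
    (inter_ops
       (Pol_sets (fun U : 'I_k -> Prop => U (zeroA hk)))
       (Pol_rels (fun th : 'I_k -> 'I_k -> Prop =>
                    is_equivalence th /\ th (zeroA hk) (oneA hk)))).
Proof.
move=> T; split; [|split].
- exact/clone_gen_sub_centralizer/sub_centralizer2.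
- by apply: centralizerS => h [].
- move=> f cf.
  have f_comm g : g (zeroA hk) = zeroA hk -> g (oneA hk) = zeroA hk ->
      forall x, f (fun i => g (x i)) = g (f x).
    move=> g0 g1; apply: commutes_unary; apply: cf; split=> // h ->.
    exact: collapse_commutes_T.
  split=> [U U0 x | th [th_equiv th01] x y]; first exact: op_preserves_zero_set.
  exact: op_preserves_equiv.
Qed.
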